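(* Define $I\colon C(X\times Y)\to C(X)$ by $(I\psi)(x)=\int_Y\psi(x,y)\,d\nu_x(y)$ and $I^*\colon\mathcal M(X)\to\mathcal M(X\times Y)$ by $I^*\eta=\int_X\nu_x\,d\eta(x)$ (i.e. $\int\psi\,d(I^*\eta)=\int_X\int_Y\psi(x,y)\,d\nu_x(y)\,d\eta(x)$). Then $$I\circ\mathcal L_\varphi=\mathcal L_\Phi\circ I\qquad\text{and}\qquad I^*\circ\mathcal L_\Phi^*=\mathcal L_\varphi^*\circ I^*.$$
   Context: Standing setting. $X$ and $Y$ are compact connected Riemannian manifolds, $X\times Y$ has the metric $d((x,y),(x',y'))=d_X(x,x')+d_Y(y,y')$. $F(x,y)=(f(x),g_x(y))$ is a skew product which is a Lipschitz local homeomorphism; $Y_x=\{x\}\times Y$ is identified with $Y$. $f$ is uniformly expanding with expansion constant $\gamma>1$. Every $y$ has exactly $d$ preimages under each $g_x$. There is a continuous function $L(\cdot,\cdot)$ such that each $z$ has a neighbourhood $U_z$ on which $F$ is injective and the inverse of $F|_{U_z}$ is $L(z)$-Lipschitz on $F(U_z)$. There are $L\ge1$ and open $\mathcal A\subset X\times Y$ with: (A1) $L(z)\le L$ on $\mathcal A$ and $L(z)<\gamma^{-1}$ off $\mathcal A$; (A2) a finite cover $\mathcal U$ of $X\times Y$ by open sets on which $F$ is injective, with $\mathcal A$ covered by $q<d$ elements of $\mathcal U$ and each element of $\mathcal U$ meeting at most one curve of $F^{-1}(c)$ for every distance-minimizing geodesic $c$. The potential $\varphi$ is $\alpha$-Hölder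 ($0<\alpha<1$) satisfying (P): $\sup\varphi-\inf\varphi<\varepsilon_\varphi$ and $|e^\varphi|_\alpha<\varepsilon_\varphi e^{\inf\varphi}$, where $\varepsilon_\varphi>0$ satisfies $s:=e^{\varepsilon_\varphi}\frac{(d-q)\gamma^{-\alpha}+qL^\alpha}{d}<1$ and $s+2s\varepsilon_\varphi\,\mathrm{diam}(Y)^\alpha<1$. Operators: $\mathcal L_\varphi\psi(z)=\sum_{\bar z\in F^{-1}z}e^{\varphi(\bar z)}\psi(\bar z)$ on $C(X\times Y)$; fiberwise $\mathcal L_x\psi(y)=\sum_{\bar y\in g_x^{-1}(y)}e^{\varphi(x,\bar y)}\psi(\bar y)$ from $C(Y_x)$ to $C(Y_{fx})$, $\mathcal L_x^n=\mathcal L_{f^{n-1}x}\circ\cdots\circ\mathcal L_x$, $\mathcal L_x^*$ dual. $\Phi(x)=\lim_{n\to\infty}\log\frac{\langle\mathcal L_x^{n+1}\mathbb 1,\sigma\rangle}{\langle\mathcal L_{fx}^n\mathbb 1,\sigma\rangle}$ for any Borel probability $\sigma$ on $Y$ (exists, independent of $\sigma$); $\mathcal L_\Phi\xi(x)=\sum_{\bar x\in f^{-1}x}e^{\Phi(\bar x)}\xi(\bar x)$ on $C(X)$; stars denote dual operators on measures. $\{\nu_x\}_{x\in X}$ is the unique family of Borel probability measures on $Y_x$ with $\mathcal L_x^*\nu_{fx}=e^{\Phi(x)}\nu_x$ for all $x$; $x\mapsto\int\psi(x,y)d\nu_x(y)$ is continuous for $\psi\in C(X\times Y)$. *)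

From HB Require Import structures.
From mathcomp Require Import all_boot all_order all_algebra.
From mathcomp Require Import all_classical all_reals all_analysis.
Set Implicit Arguments. Unset Strict Implicit. Unset Printing Implicit Defensive.
Import Order.TTheory GRing.Theory Num.Theory.
Import numFieldNormedType.Exports.
Local Open Scope classical_set_scope.
Local Open Scope ring_scope.

Definition borelT (T : ptopologicalType) := g_sigma_algebraType (@open T).

Section Defs.
Variable R : realType.

Definition is_metric_fn (T : Type) (d : T -> T -> R) : Prop :=
  [/\ (forall x y, d x y = 0 <-> x = y),
      (forall x y, d x y = d y x) &
      (forall x y z, d x z <= d x y + d y z)].

Definition metrizes_top (T : topologicalType) (d : T -> T -> R) : Prop :=
  forall A : set T, open A <->
    (forall x, A x -> exists e : R, 0 < e /\ [set y | d x y < e] `<=` A).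

Definition dsum_prod (X Y : Type) (dX : X -> X -> R) (dY : Y -> Y -> R)
  (z w : X * Y) : R := dX z.1 w.1 + dY z.2 w.2.

(* Riemannian (l^2) product distance, used only to speak about geodesics *)
Definition dl2_prod (X Y : Type) (dX : X -> X -> R) (dY : Y -> Y -> R)
  (z w : X * Y) : R := Num.sqrt (dX z.1 w.1 ^+ 2 + dY z.2 w.2 ^+ 2).

Definition skew_map (X Y : Type) (f : X -> X) (g : X -> Y -> Y) (z : X * Y) : X * Y :=
  (f z.1, g z.1 z.2).

Definition inj_on_set (S T : Type) (F : S -> T) (U : set S) : Prop :=
  forall z w, U z -> U w -> F z = F w -> z = w.

Definition is_local_inverse (S T : Type) (F : S -> T) (U : set S) (G : T -> S) :=
  (forall w, U w -> G (F w) = w) /\ (forall v, (F @` U) v -> U (G v) /\ F (G v) = v).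

Definition lip_on (S T : Type) (dS : S -> S -> R) (dT : T -> T -> R)
  (K : R) (A : set S) (h : S -> T) : Prop :=
  forall z w, A z -> A w -> dT (h z) (h w) <= K * dS z w.

Definition local_homeo_map (S T : topologicalType) (F : S -> T) : Prop :=
  forall z, exists U : set S, [/\ open U, U z, inj_on_set F U, open (F @` U) &
    exists G, is_local_inverse F U G /\ {within F @` U, continuous G}].

Definition unif_exp (X : Type) (dX : X -> X -> R) (f : X -> X) (gam : R) :=
  exists delta : R, 0 < delta /\
    forall x x', dX x x' < delta -> gam * dX x x' <= dX (f x) (f x').

Definition min_geod (T : Type) (d : T -> T -> R) (c : R -> T) : Prop :=
  forall s t, 0 <= s <= 1 -> 0 <= t <= 1 -> d (c s) (c t) = `|s - t| * d (c 0) (c 1).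

(* a curve of F^{-1}(c): a continuous lift of c through F *)
Definition lift_curve (T : topologicalType) (F : T -> T) (c ct : R -> T) : Prop :=
  {within `[0, 1], continuous ct} /\ forall t, 0 <= t <= 1 -> F (ct t) = c t.

Definition holder_fn (T : Type) (d : T -> T -> R) (alpha : R) (h : T -> R) : Prop :=
  exists K : R, forall z w, `|h z - h w| <= K * (d z w) `^ alpha.

(* |h|_alpha < c, where |h|_alpha = sup_{z<>w} |h z - h w| / d(z,w)^alpha *)
Definition hseminorm_lt (T : Type) (d : T -> T -> R) (alpha : R) (h : T -> R)
  (c : R) : Prop :=
  exists K : R, K < c /\ forall z w, z <> w -> `|h z - h w| <= K * (d z w) `^ alpha.

Definition mdiam (T : Type) (d : T -> T -> R) : R :=
  sup [set d y y' | y in setT & y' in setT].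

Definition transfer_op (S : choiceType) (phi : S -> R) (F : S -> S) (psi : S -> R)
  (z : S) : R :=
  \sum_(zb \in [set zb | F zb = z]) expR (phi zb) * psi zb.

Definition fib_op (X Y : choiceType) (phi : X * Y -> R) (g : X -> Y -> Y) (x : X)
  (psi : Y -> R) : Y -> R :=
  fun y => \sum_(yb \in [set yb | g x yb = y]) expR (phi (x, yb)) * psi yb.

Fixpoint fib_iter (X Y : choiceType) (phi : X * Y -> R) (f : X -> X)
  (g : X -> Y -> Y) (n : nat) (x : X) (psi : Y -> R) : Y -> R :=
  match n with
  | 0 => psi
  | n'.+1 => fib_op phi g (iter n' f x) (fib_iter phi f g n' x psi)
  end.

Definition Iop (X Y : ptopologicalType) (nu : X -> probability (borelT Y) R)
  (psi : X * Y -> R) (x : X) : R :=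
  Rintegral (nu x) setT (fun y : borelT Y => psi (x, y)).

End Defs.

(* Since f is expanding, it is injective on small balls, so by compactness
   every fibre of f is finite, and the transfer operator of the skew product
   splits along it:
     L_phi psi (x, y) = sum_{f a = x} (L_a psi(a, .)) (y).
   Integrating against nu_x and using L_a^* nu_x = e^{Phi a} nu_a for each
   preimage a gives I (L_phi psi) = L_Phi (I psi); the dual identity is this
   one integrated against eta. The sum may be taken out of the integral because
   each L_a psi(a, .) is continuous: g_a is a d-to-1 map whose local inverse
   branches come from those of the local homeomorphism F. *)

From HB Require Import structures.
From mathcomp Require Import all_boot all_order all_algebra.
From mathcomp Require Import all_classical all_reals all_analysis finmap.
Import Order.TTheory GRing.Theory Num.Theory.
Import numFieldNormedType.Exports.
Local Open Scope classical_set_scope.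
Local Open Scope ring_scope.
Set Implicit Arguments. Unset Strict Implicit.

Section metric.
Variables (R : realType) (T : Type) (dT : T -> T -> R).
Hypothesis metric_dT : is_metric_fn dT.

Lemma metric_xx x : dT x x = 0.
Proof. by case: metric_dT => dT0 _ _; apply/dT0. Qed.

Lemma metric_ge0 x y : 0 <= dT x y.
Proof.
case: metric_dT => _ dTC dT_triangle.
by have := dT_triangle x y x; rewrite metric_xx dTC -mulr2n pmulrn_lge0.
Qed.

End metric.

Section metric_topology.
Variables (R : realType) (T : topologicalType) (dT : T -> T -> R).
Hypotheses (metric_dT : is_metric_fn dT) (top_dT : metrizes_top dT).
Let metric_xx := metric_xx metric_dT.
Let metric_ge0 := metric_ge0 metric_dT.

Lemma metric_ball_open c r : open [set y | dT c y < r].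
Proof.
apply/top_dT => y /= cy; exists (r - dT c y); split; first by rewrite subr_gt0.
move=> z /= yz; case: metric_dT => _ _ dT_triangle.
by apply: le_lt_trans (dT_triangle c y z) _; rewrite -ltrBrDl.
Qed.

Lemma metric_nbhsP x (A : set T) :
  nbhs x A <-> exists e : R, 0 < e /\ [set y | dT x y < e] `<=` A.
Proof.
split.
  rewrite nbhsE => -[B [oB Bx] BA].
  have [e [e0 eB]] := proj1 (top_dT B) oB x Bx.
  by exists e; split => // y /eB /BA.
move=> [e [e0 eA]]; rewrite nbhsE; exists [set y | dT x y < e] => //.
by split; [exact: metric_ball_open | rewrite /= metric_xx].
Qed.

Lemma metric_cvg_near (S : Type) (F : set_system S) (h : S -> T) x e :
  h @ F --> x -> 0 < e -> \forall s \near F, dT x (h s) < e.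
Proof.
by move=> hx e0; apply: (hx [set y | dT x y < e]); apply/metric_nbhsP; exists e; split.
Qed.

Lemma metric_cvg_near_neq (S : Type) (F : set_system S) (h1 h2 : S -> T) (a b : T) :
  Filter F -> h1 @ F --> a -> h2 @ F --> b -> a <> b ->
  \forall s \near F, h1 s <> h2 s.
Proof.
move=> FF h1a h2b ab.
have dab : 0 < dT a b / 2.
  rewrite divr_gt0// lt_neqAle metric_ge0 andbT.
  by apply/eqP => /esym; case: metric_dT => dT0 _ _ /dT0.
near=> s => h12.
have : dT a b < dT a b / 2 + dT a b / 2.
  case: metric_dT => _ dTC dT_triangle.
  apply: le_lt_trans (dT_triangle a (h1 s) b) _; rewrite {2}h12 [dT _ b]dTC.
  by apply: ltrD; near: s; [exact: metric_cvg_near h1a _ | exact: metric_cvg_near h2b _].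
by rewrite -splitr ltxx.
Unshelve. all: by end_near.
Qed.

Lemma holder_fn_continuous alpha (h : T -> R) :
  0 < alpha -> holder_fn dT alpha h -> continuous h.
Proof.
move=> alpha0 [K hK] y0; apply/cvgrPdist_lt => e e0.
pose K' := `|K| + 1.
have K'0 : 0 < K' by rewrite ltr_pwDr.
pose r := (e / K') `^ alpha^-1.
have r0 : 0 < r by rewrite powR_gt0// divr_gt0.
near=> y.
apply: le_lt_trans (hK y0 y) _.
apply: (@le_lt_trans _ _ (K' * dT y0 y `^ alpha)).
  by apply: ler_wpM2r; [exact: powR_ge0 | rewrite (le_trans (ler_norm K)) ?lerDl].
have : dT y0 y `^ alpha < r `^ alpha.
  apply: gt0_ltr_powR; rewrite ?nnegrE ?metric_ge0 ?ltW//.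
  by near: y; apply: metric_cvg_near => //; exact: cvg_id.
rewrite /r -powRrM mulVf ?gt_eqF// powRr1 ?ltW ?divr_gt0//.
by rewrite -(ltr_pM2l K'0) mulrCA mulfV ?gt_eqF// mulr1.
Unshelve. all: by end_near.
Qed.

End metric_topology.

Lemma subset1_finite_set (T : Type) (A : set T) : is_subset1 A -> finite_set A.
Proof.
move=> A1; have [[a Aa]|/forallNP A0] := pselect (exists a, A a).
  by apply: (@sub_finite_set _ _ [set a]) (finite_set1 a) => b Ab; exact: A1.
by rewrite (_ : A = set0) ?finite_set0//; apply/seteqP; split => // b /A0.
Qed.

Definition ball_injective (R : realType) (X Z : Type) (dX : X -> X -> R)
  (f : X -> Z) (delta : R) : Prop :=
  forall a b, f a = f b -> dX a b < delta -> a = b.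

Lemma unif_exp_ball_injective (R : realType) (X : Type) (dX : X -> X -> R)
  (f : X -> X) gam :
  is_metric_fn dX -> 0 < gam -> unif_exp dX f gam ->
  exists2 delta : R, 0 < delta & ball_injective dX f delta.
Proof.
move=> metric_dX gam0 [delta [delta0 expand]]; exists delta => // a b fab ab.
have := expand _ _ ab; rewrite fab (metric_xx metric_dX) pmulr_rle0// => ab0.
have [dX0 _ _] := metric_dX.
by apply/dX0/eqP; rewrite eq_le ab0 (metric_ge0 metric_dX).
Qed.

Lemma ball_injective_fibre_finite (R : realType) (X : ptopologicalType) (Z : Type)
  (dX : X -> X -> R) (f : X -> Z) (delta : R) :
  is_metric_fn dX -> metrizes_top dX -> compact [set: X] -> 0 < delta ->
  ball_injective dX f delta -> forall z, finite_set [set a | f a = z].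
Proof.
move=> metric_dX top_dX cX delta0 f_ball_inj z.
pose ball c := [set y | dX c y < delta / 2].
have [C _ Ccover] : finite_subset_cover [set: X] ball [set: X].
  move: cX; rewrite compact_cover; apply.
    by move=> c _; exact: metric_ball_open.
  by move=> y _; exists y => //; rewrite /ball /= metric_xx// divr_gt0.
have -> : [set a | f a = z] = \bigcup_(c in [set` C]) ([set a | f a = z] `&` ball c).
  apply/seteqP; split => [a fa|a [c _ []]//].
  by have [c Cc ca] := Ccover a I; exists c.
apply: bigcup_finite; first exact: finite_fset.
move=> c _; apply: subset1_finite_set => a b [fa ca] [fb cb].
apply: f_ball_inj; first by rewrite fa fb.
case: metric_dX => _ dXC dX_triangle.
by apply: le_lt_trans (dX_triangle a c b) _; rewrite dXC [delta]splitr ltrD.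
Qed.

Lemma transfer_op_skew_map (R : realType) (X Y : choiceType) (phi : X * Y -> R)
  (f : X -> X) (g : X -> Y -> Y) (psi : X * Y -> R) x y :
  finite_set [set a | f a = x] -> (forall a, finite_set [set b | g a b = y]) ->
  transfer_op phi (skew_map f g) psi (x, y) =
  \sum_(a \in [set a | f a = x]) fib_op phi g a (fun b => psi (a, b)) y.
Proof.
move=> fin_f fin_g.
pose Q := \bigcup_(a in [set a | f a = x]) [set b | g a b = y].
pose G (z : X * Y) := if g z.1 z.2 == y then expR (phi z) * psi z else 0.
have fin_Q : finite_set Q by exact: bigcup_finite.
transitivity (\sum_(z \in [set a | f a = x] `*` Q) G z).
  rewrite /transfer_op (eq_fsbigr G); last first.
    by move=> [a b] /set_mem; rewrite /skew_map => -[_ /= gab]; rewrite /G /= gab eqxx.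
  apply: fsbig_widen => [[a b]|[a b] [[/= fa _]]]; rewrite /skew_map /=.
    by move=> -[fa gab]; split => //; exists a.
  move=> Fab; rewrite /G /=; case: eqP => // gab.
  by exfalso; apply: Fab; rewrite fa gab.
transitivity (\sum_(a \in [set a | f a = x]) \sum_(b \in Q) G (a, b)).
  by rewrite pair_fsbig//; apply: eq_fsbigr => -[].
apply: eq_fsbigr => a /set_mem fa.
rewrite /fib_op -(@fsbig_widen _ _ _ _ [set b | g a b = y] Q).
- by apply: eq_fsbigr => b /set_mem /= gab; rewrite /G /= gab eqxx.
- by move=> b gab; exists a.
- by move=> b [_ /= gab]; rewrite /G /=; case: eqP.
Qed.

Section continuous_integrals.
Variables (R : realType) (Y : ptopologicalType) (mu : probability (borelT Y) R).

Lemma continuous_borel_measurable (h : borelT Y -> R) :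
  continuous (h : Y -> R) -> measurable_fun setT h.
Proof.
move=> ch; apply: (measurability _ (measurable_realfun.RGenOpens.measurableE R)).
move=> _ [_ [a [b ->]] <-]; rewrite setTI; apply: sub_sigma_algebra.
by move/continuousP: ch; apply; exact: interval_open.
Qed.

Lemma continuous_compact_bounded (h : Y -> R) :
  compact [set: Y] -> continuous h -> [bounded h y | y in [set: Y]].
Proof.
move=> cY ch.
have /compact_bounded[M [Mreal hM]] : compact (h @` [set: Y]).
  by apply: continuous_compact => //; exact: continuous_subspaceT.
by exists M; split => // r Mr y _; apply: hM => //; exists y.
Qed.

Lemma continuous_integrable (h : Y -> R) :
  compact [set: Y] -> continuous h -> mu.-integrable setT (EFin \o h).
Proof.
move=> cY ch; apply: measurable_bounded_integrable => //.
- by move: (probability_setT mu) => /= ->; exact: ltry.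
- exact: continuous_borel_measurable.
- exact: continuous_compact_bounded.
Qed.

Lemma Rintegral_fsum (I : choiceType) (A : set I) (h : I -> Y -> R) :
  finite_set A -> (forall i, A i -> mu.-integrable setT (EFin \o h i)) ->
  Rintegral mu setT (fun y => \sum_(i \in A) h i y) =
  \sum_(i \in A) Rintegral mu setT (h i).
Proof.
move=> finA hint; rewrite fsbig_finite//.
under eq_Rintegral do rewrite fsbig_finite//.
have : forall i, i \in (fset_set A : seq I) -> A i.
  by move=> i; rewrite in_fset_set// => /set_mem.
elim: (fset_set A : seq I) => [|i s IHs] sA.
  by under eq_Rintegral do rewrite big_nil; rewrite big_nil Rintegral_cst// mul0r.
have sA' j : j \in s -> A j by move=> sj; apply/sA/mem_behead.
have hint_s : mu.-integrable setT (EFin \o fun y => \sum_(j <- s) h j y).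
  rewrite (_ : _ \o _ = fun y => \sum_(j <- s) (EFin \o h j) y)%E; last first.
    by apply/funext => y /=; rewrite -sumEFin.
  apply: (eq_integrable measurableT
    (fun y : borelT Y => \sum_(j <- s | j \in s) (EFin \o h j) y)%E).
    by move=> y _; rewrite -big_seq.
  by apply: integrable_sum => // j /sA' /hint.
under eq_Rintegral do rewrite big_cons.
rewrite RintegralD// ?big_cons ?IHs//.
by apply/hint/sA; rewrite in_cons eqxx.
Qed.

End continuous_integrals.

Lemma subset_card_eq (T : choiceType) (A B : set T) n :
  A `<=` B -> (A #= `I_n)%card -> (B #= `I_n)%card -> A = B.
Proof.
move=> AB An Bn.
have [finA finB] : finite_set A /\ finite_set B by split; exists n.
rewrite -(fset_setK finA) -(fset_setK finB).
suff -> : fset_set A = fset_set B by [].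
apply/eqP; rewrite eqEfcard; apply/andP; split; first by rewrite -fset_set_sub.
by rewrite (card_fset_set An) (card_fset_set Bn).
Qed.

Section fibre_sums.
Variables (R : realType) (T : ptopologicalType) (S : topologicalType).
Variable dT : T -> T -> R.
Hypotheses (metric_dT : is_metric_fn dT) (top_dT : metrizes_top dT).
Variables (h : T -> S) (n : nat).
Hypothesis card_fibre : forall s, ([set t | h t = s] #= `I_n)%card.
Hypothesis local_section : forall t, exists sec : S -> T,
  [/\ sec (h t) = t, {for h t, continuous sec} & \forall s \near h t, h (sec s) = s].

Lemma fibre_local_enumeration s0 : exists sec : nat -> S -> T,
  (forall i, (i < n)%N -> {for s0, continuous (sec i)}) /\
  \forall s \near s0, set_inj `I_n (sec^~ s) /\
                      [set t | h t = s] = [set sec i s | i in `I_n].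
Proof.
have /pcard_eqP[b] : (`I_n #= [set t | h t = s0])%card by rewrite card_eq_sym.
have bS := 'funS_b; have bI := 'inj_b.
have [sec hsec] := choice (fun i => local_section (b i)).
have hb i : (i < n)%N -> h (b i) = s0 by move=> ni; exact: (bS i ni).
exists sec; split=> [i ni|].
  by have [_ ] := hsec i; rewrite hb.
have sec_fibre : \forall s \near s0, forall i : 'I_n, h (sec i s) = s.
  by apply: filter_forall => i; have [_ _] := hsec i; rewrite hb.
have sec_neq : \forall s \near s0, forall ij : 'I_n * 'I_n,
    ij.1 != ij.2 :> nat -> sec ij.1 s <> sec ij.2 s.
  apply: filter_forall => -[i j] /=; have [ij|ij] := eqVneq (i : nat) j.
    by apply: nearW.
  have [sbi csi _] := hsec i; have [sbj csj _] := hsec j.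
  rewrite hb // in sbi csi; rewrite hb // in sbj csj.
  have bij : b i <> b j.
    by move/(bI _ _ (mem_set (ltn_ord i)) (mem_set (ltn_ord j)))/eqP; apply/negP.
  have := metric_cvg_near_neq metric_dT top_dT (nbhs_filter s0) csi csj.
  by rewrite sbi sbj => /(_ bij); apply: filterS => s.
(* Near s0 the n branches are pairwise distinct points of an n-element fibre. *)
apply: filterS2 sec_fibre sec_neq => s sec_fibre_s sec_neq_s.
have inj : set_inj `I_n (sec^~ s).
  move=> i j /set_mem ni /set_mem nj eq_sec; apply/eqP; apply: contraT => ij.
  by have := sec_neq_s (Ordinal ni, Ordinal nj) ij.
split=> //; apply/esym/subset_card_eq; last exact: card_fibre.
- by move=> _ [i ni <-]; exact: (sec_fibre_s (Ordinal ni)).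
- exact: inj_card_eq.
Qed.

Lemma fibre_sum_continuous (Hf : T -> R) : continuous Hf ->
  continuous (fun s => \sum_(t \in [set t | h t = s]) Hf t).
Proof.
move=> cHf s0; have [sec [csec near_fibre]] := fibre_local_enumeration s0.
have sum_near : \forall s \near s0,
    \sum_(i < n) Hf (sec i s) = \sum_(t \in [set t | h t = s]) Hf t.
  by apply: filterS near_fibre => s [inj ->]; rewrite fsbig_image// -fsbig_ord.
rewrite /continuous_at -(nbhs_singleton sum_near).
apply: cvg_trans (near_eq_cvg sum_near) _.
apply: cvg_big; [exact: add_continuous | move=> i _].
exact: continuous_comp (csec i (ltn_ord i)) (cHf _).
Qed.

End fibre_sums.

Lemma skew_map_local_section (R : realType) (X Y : topologicalType)
  (dX : X -> X -> R) (f : X -> X) (g : X -> Y -> Y) (delta : R) :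
  is_metric_fn dX -> metrizes_top dX -> 0 < delta -> ball_injective dX f delta ->
  local_homeo_map (skew_map f g) ->
  forall x0 b, exists sec : Y -> Y,
    [/\ sec (g x0 b) = b, {for g x0 b, continuous sec} &
        \forall y \near g x0 b, g x0 (sec y) = y].
Proof.
move=> metric_dX top_dX delta0 f_ball_inj Floc x0 b.
have [U [_ Ub _ oFU [G [[GF FG] cG]]]] := Floc (x0, b).
set y0 := g x0 b.
have FUy0 : (skew_map f g @` U) (f x0, y0) by exists (x0, b).
have G0 : G (f x0, y0) = (x0, b) by exact: (GF (x0, b) Ub).
have cpair : {for y0, continuous (fun y => (f x0, y))}.
  by apply: cvg_pair; [exact: cvg_cst | exact: cvg_id].
have clift : {for y0, continuous (fun y => G (f x0, y))}.
  apply: continuous_comp cpair _.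
  by move: cG; rewrite continuous_open_subspace// => /(_ _ (mem_set FUy0)).
exists (fun y => (G (f x0, y)).2); split.
- by rewrite G0.
- exact: continuous_comp clift cvg_snd.
(* The first coordinate of the branch stays in the fibre of f x0 and close to
   x0, hence equals x0. *)
have near_FU : \forall y \near y0, (skew_map f g @` U) (f x0, y).
  by apply: cpair; apply: open_nbhs_nbhs.
have near_x0 : \forall y \near y0, dX x0 (G (f x0, y)).1 < delta.
  apply: (metric_cvg_near metric_dX top_dX _ delta0).
  by rewrite -[X in _ --> X]/((x0, b).1) -G0; exact: continuous_comp clift cvg_fst.
apply: filterS2 near_FU near_x0 => y /FG[_]; rewrite /skew_map => -[fG gG] dG.
by rewrite [X in g X](f_ball_inj _ _ (esym fG) dG).
Qed.

Lemma holder_fn_slice (R : realType) (X Y : Type) (dX : X -> X -> R) (dY : Y -> Y -> R)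
  alpha (h : X * Y -> R) x :
  is_metric_fn dX -> holder_fn (dsum_prod dX dY) alpha h ->
  holder_fn dY alpha (fun y => h (x, y)).
Proof.
move=> metric_dX [K hK]; exists K => y y'.
by have := hK (x, y) (x, y'); rewrite /dsum_prod /= metric_xx// add0r.
Qed.

Section skew_product.
Variables (R : realType) (X Y : ptopologicalType).
Variables (dX : X -> X -> R) (dY : Y -> Y -> R) (f : X -> X) (g : X -> Y -> Y).
Variables (d : nat) (delta : R) (phi : X * Y -> R) (Phi : X -> R).
Variable nu : X -> probability (borelT Y) R.
Hypotheses (metric_dX : is_metric_fn dX) (top_dX : metrizes_top dX).
Hypotheses (metric_dY : is_metric_fn dY) (top_dY : metrizes_top dY).
Hypotheses (compactX : compact [set: X]) (compactY : compact [set: Y]).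
Hypotheses (delta0 : 0 < delta) (f_ball_inj : ball_injective dX f delta).
Hypothesis Floc : local_homeo_map (skew_map f g).
Hypothesis card_g : forall x y, ([set b | g x b = y] #= `I_d)%card.
Hypothesis phi_slice : forall x, continuous (fun y => phi (x, y)).
Hypothesis nu_conformal : forall x psi, continuous psi ->
  Rintegral (nu (f x)) setT (fib_op phi g x psi) = expR (Phi x) * Rintegral (nu x) setT psi.

Let fibre_f_finite x : finite_set [set a | f a = x].
Proof.
exact: ball_injective_fibre_finite metric_dX top_dX compactX delta0 f_ball_inj x.
Qed.

Let fibre_g_finite x y : finite_set [set b | g x b = y].
Proof. by exists d. Qed.

Lemma fib_op_continuous x psi : continuous psi -> continuous (fib_op phi g x psi).
Proof.
move=> cpsi; apply: (fibre_sum_continuous metric_dY top_dY (card_g x)).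
  exact: skew_map_local_section metric_dX top_dX delta0 f_ball_inj Floc x.
move=> y; apply: cvgM; last exact: cpsi.
by apply: continuous_comp; [exact: phi_slice | exact: continuous_expR].
Qed.

Lemma Iop_transfer_op psi : continuous psi ->
  Iop nu (transfer_op phi (skew_map f g) psi) = transfer_op Phi f (Iop nu psi).
Proof.
move=> cpsi; apply/funext => x.
have cpsi_slice a : continuous (fun b => psi (a, b)).
  move=> b; apply: continuous_comp (cpsi _).
  by apply: cvg_pair; [exact: cvg_cst | exact: cvg_id].
rewrite /Iop; under eq_Rintegral do rewrite transfer_op_skew_map//.
rewrite Rintegral_fsum//; last first.
  by move=> a _; apply: continuous_integrable => //; exact: fib_op_continuous.
by apply: eq_fsbigr => a /set_mem <-; rewrite nu_conformal.
Qed.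

End skew_product.

Unset Implicit Arguments. Set Strict Implicit.

Theorem theorem4p4 (R : realType) (X Y : ptopologicalType)
  (dX : X -> X -> R) (dY : Y -> Y -> R)
  (f : X -> X) (g : X -> Y -> Y) (gam : R) (d : nat)
  (Lfun : X * Y -> R) (L : R) (A : set (X * Y))
  (N : nat) (U : nat -> set (X * Y)) (q : nat)
  (alpha : R) (phi : X * Y -> R) (eps : R)
  (Phi : X -> R) (nu : X -> probability (borelT Y) R) :
  (* X, Y compact connected metric spaces *)
  is_metric_fn dX -> metrizes_top dX -> compact [set: X] -> connected [set: X] ->
  is_metric_fn dY -> metrizes_top dY -> compact [set: Y] -> connected [set: Y] ->
  (* F = skew_map f g is a Lipschitz local homeomorphism for d = dX + dY *)
  (exists K : R, lip_on (dsum_prod dX dY) (dsum_prod dX dY) K setT (skew_map f g)) ->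
  local_homeo_map (skew_map f g) ->
  (* f uniformly expanding with constant gam > 1 *)
  1 < gam -> unif_exp dX f gam ->
  (* every y has exactly d preimages under each g_x *)
  (forall x y, ([set yb | g x yb = y] #= `I_d)%card) ->
  (* the continuous function L(.) *)
  continuous Lfun ->
  (forall z, exists Uz : set (X * Y),
     [/\ open Uz, Uz z, inj_on_set (skew_map f g) Uz &
       exists G, is_local_inverse (skew_map f g) Uz G /\
         lip_on (dsum_prod dX dY) (dsum_prod dX dY) (Lfun z) (skew_map f g @` Uz) G]) ->
  (* (A1) *)
  1 <= L -> open A ->
  (forall z, A z -> Lfun z <= L) ->
  (forall z, ~ A z -> Lfun z < gam^-1) ->
  (* (A2) *)
  (forall i, (i < N)%N -> open (U i) /\ inj_on_set (skew_map f g) (U i)) ->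
  (forall z, exists2 i, (i < N)%N & U i z) ->
  (exists J : seq nat, [/\ uniq J, size J = q, all (fun i => i < N)%N J &
       A `<=` \bigcup_(i in [set i | i \in J]) U i]) ->
  (q < d)%N ->
  (forall i, (i < N)%N -> forall c : R -> X * Y, min_geod (dl2_prod dX dY) c ->
     forall c1 c2, lift_curve (skew_map f g) c c1 -> lift_curve (skew_map f g) c c2 ->
       (exists t, 0 <= t <= 1 /\ U i (c1 t)) ->
       (exists t, 0 <= t <= 1 /\ U i (c2 t)) ->
       forall t, 0 <= t <= 1 -> c1 t = c2 t) ->
  (* (P) *)
  0 < alpha < 1 -> holder_fn (dsum_prod dX dY) alpha phi ->
  0 < eps ->
  sup (range phi) - inf (range phi) < eps ->
  hseminorm_lt (dsum_prod dX dY) alpha (fun z => expR (phi z))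
    (eps * expR (inf (range phi))) ->
  (let s := expR eps * (((d - q)%N%:R * gam `^ (- alpha) + q%:R * L `^ alpha)
                         / d%:R) in
   s < 1 /\ s + 2 * s * eps * (mdiam dY) `^ alpha < 1) ->
  (* Phi *)
  (forall (x : X) (sigma : probability (borelT Y) R),
     (fun n : nat => ln (Rintegral sigma setT (fib_iter phi f g n.+1 x (cst 1))
                      / Rintegral sigma setT (fib_iter phi f g n (f x) (cst 1))))
       @ \oo --> Phi x) ->
  (* the family nu_x: L_x^* nu_{fx} = e^{Phi x} nu_x, tested on C(Y) *)
  (forall (x : X) (psi : Y -> R), continuous psi ->
     Rintegral (nu (f x)) setT (fib_op phi g x psi)
     = expR (Phi x) * Rintegral (nu x) setT psi) ->
  (forall psi : X * Y -> R, continuous psi -> continuous (Iop nu psi)) ->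
  (* conclusion *)
  (forall psi : X * Y -> R, continuous psi ->
     Iop nu (transfer_op phi (skew_map f g) psi) = transfer_op Phi f (Iop nu psi)) /\
  (forall (eta : {finite_measure set (borelT X) -> \bar R}) (psi : X * Y -> R),
     continuous psi ->
     (\int[eta]_x (Iop nu (transfer_op phi (skew_map f g) psi) x)%:E
      = \int[eta]_x (transfer_op Phi f (Iop nu psi) x)%:E)%E).
Proof.
(* (A1), (A2), (P) and the limit defining Phi serve only to construct Phi and
   nu; the identity uses nothing about them but the conformality of nu. *)
move=> metric_dX top_dX compactX _ metric_dY top_dY compactY _ _ Floc gam1 expand
  card_g _ _ _ _ _ _ _ _ _ _ _ /andP[alpha0 _] holder_phi _ _ _ _ _ nu_conformal _.
have [delta delta0 f_ball_inj] :=
  unif_exp_ball_injective metric_dX (lt_trans ltr01 gam1) expand.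
have phi_slice x :=
  holder_fn_continuous metric_dY top_dY alpha0 (holder_fn_slice x metric_dX holder_phi).
have I_transfer := Iop_transfer_op metric_dX top_dX metric_dY top_dY compactX compactY
  delta0 f_ball_inj Floc card_g phi_slice nu_conformal.
by split=> // eta psi cpsi; rewrite I_transfer.
Qed.
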